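(* Let $u,v,w$ be unit vectors in an inner product space (over $\mathbb{R}$ or $\mathbb{C}$). Then for every real $k\ge2$, $$\sqrt[k]{1-|\langle u,v\rangle|^k}\le\sqrt[k]{1-|\langle u,w\rangle|^k}+\sqrt[k]{1-|\langle w,v\rangle|^k};$$ in particular $$\sqrt{1-|\langle u,v\rangle|^2}\le\sqrt{1-|\langle u,w\rangle|^2}+\sqrt{1-|\langle w,v\rangle|^2}.$$ The same inequalities hold with $|\operatorname{Re}\langle\cdot,\cdot\rangle|$ in place of $|\langle\cdot,\cdot\rangle|$. *)

From Stdlib Require Import Reals.
Open Scope R_scope.

(** Nonnegative real power with positive exponent, with the convention
    0 ^ y = 0 (Stdlib's [Rpower 0 y] is 1, since [ln 0 = 0]). *)
Definition rpow (x y : R) : R := if Rlt_dec 0 x then Rpower x y else 0.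

Definition kroot (k x : R) : R := rpow x (/ k).

Record RInnerSpace (V : Type) := {
  r_add : V -> V -> V;
  r_zero : V;
  r_opp : V -> V;
  r_scal : R -> V -> V;
  r_inner : V -> V -> R;
  r_addA : forall x y z, r_add x (r_add y z) = r_add (r_add x y) z;
  r_addC : forall x y, r_add x y = r_add y x;
  r_add0 : forall x, r_add x r_zero = x;
  r_addN : forall x, r_add x (r_opp x) = r_zero;
  r_scalA : forall a b x, r_scal a (r_scal b x) = r_scal (a * b) x;
  r_scal1 : forall x, r_scal 1 x = x;
  r_scalDr : forall a x y, r_scal a (r_add x y) = r_add (r_scal a x) (r_scal a y);
  r_scalDl : forall a b x, r_scal (a + b) x = r_add (r_scal a x) (r_scal b x);
  r_inner_sym : forall x y, r_inner x y = r_inner y x;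
  r_inner_addl : forall x y z, r_inner (r_add x y) z = r_inner x z + r_inner y z;
  r_inner_scall : forall a x z, r_inner (r_scal a x) z = a * r_inner x z;
  r_inner_pos : forall x, 0 <= r_inner x x;
  r_inner_def : forall x, r_inner x x = 0 -> x = r_zero
}.
Arguments r_inner {V} _ _ _.

Definition r_norm {V} (S : RInnerSpace V) (x : V) : R := sqrt (r_inner S x x).

Record Cplx := mkC { Cre : R; Cim : R }.
Definition Cadd (z w : Cplx) : Cplx := mkC (Cre z + Cre w) (Cim z + Cim w).
Definition Cmul (z w : Cplx) : Cplx :=
  mkC (Cre z * Cre w - Cim z * Cim w) (Cre z * Cim w + Cim z * Cre w).
Definition Cconj (z : Cplx) : Cplx := mkC (Cre z) (- Cim z).
Definition C0 : Cplx := mkC 0 0.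
Definition C1 : Cplx := mkC 1 0.
Definition Cmod (z : Cplx) : R := sqrt (Cre z ^ 2 + Cim z ^ 2).

Record CInnerSpace (V : Type) := {
  c_add : V -> V -> V;
  c_zero : V;
  c_opp : V -> V;
  c_scal : Cplx -> V -> V;
  c_inner : V -> V -> Cplx;
  c_addA : forall x y z, c_add x (c_add y z) = c_add (c_add x y) z;
  c_addC : forall x y, c_add x y = c_add y x;
  c_add0 : forall x, c_add x c_zero = x;
  c_addN : forall x, c_add x (c_opp x) = c_zero;
  c_scalA : forall a b x, c_scal a (c_scal b x) = c_scal (Cmul a b) x;
  c_scal1 : forall x, c_scal C1 x = x;
  c_scalDr : forall a x y, c_scal a (c_add x y) = c_add (c_scal a x) (c_scal a y);
  c_scalDl : forall a b x, c_scal (Cadd a b) x = c_add (c_scal a x) (c_scal b x);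
  c_inner_conj : forall x y, c_inner y x = Cconj (c_inner x y);
  c_inner_addl : forall x y z, c_inner (c_add x y) z = Cadd (c_inner x z) (c_inner y z);
  c_inner_scall : forall a x z, c_inner (c_scal a x) z = Cmul a (c_inner x z);
  c_inner_pos : forall x, 0 <= Cre (c_inner x x);
  c_inner_def : forall x, c_inner x x = C0 -> x = c_zero
}.
Arguments c_inner {V} _ _ _.

Definition c_norm {V} (S : CInnerSpace V) (x : V) : R := sqrt (Cre (c_inner S x x)).

From Stdlib Require Import Reals Lra Psatz.
Open Scope R_scope.

(* For unit vectors with p = <u,v>, q = <u,w>, r = <w,v>, Cauchy-Schwarz applied to the
   components of u and v orthogonal to w gives (p - q r)^2 <= (1 - q^2)(1 - r^2), from which
   the sines s = sqrt (1 - x^2) satisfy the triangle inequality (the case k = 2).  For k >= 2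
   the k-distance is G(s) = (1 - (1 - s^2)^(k/2))^(1/k); G is nondecreasing with G(0) = 0 and
   G(s)/s is nonincreasing by convexity of t^(k/2), so G is subadditive.  In a complex space,
   multiplying u and v by phases makes <u,w> and <w,v> nonnegative reals and only decreases
   |Re <u,v>| below |<u,v>|, so the real argument applies in the underlying real space with
   inner product Re <x,y>; that space also gives the |Re| inequality directly. *)

Lemma rpow_Rpower x e : 0 < x -> rpow x e = Rpower x e.
Proof. intro Hx; unfold rpow; destruct (Rlt_dec 0 x); [reflexivity | lra]. Qed.

Lemma rpow_0l e : rpow 0 e = 0.
Proof. unfold rpow; destruct (Rlt_dec 0 0); [lra | reflexivity]. Qed.

Lemma rpow_ge0 x e : 0 <= rpow x e.
Proof. unfold rpow; destruct (Rlt_dec 0 x); [left; apply exp_pos | lra]. Qed.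

Lemma rpow_1l e : rpow 1 e = 1.
Proof. rewrite rpow_Rpower by lra; unfold Rpower; rewrite ln_1, Rmult_0_r; apply exp_0. Qed.

Lemma rpow_1r x : 0 <= x -> rpow x 1 = x.
Proof.
  intros [Hx | <-]; [rewrite rpow_Rpower by lra; apply Rpower_1, Hx | apply rpow_0l].
Qed.

Lemma rpow_le_compat e a b : 0 <= e -> 0 <= a <= b -> rpow a e <= rpow b e.
Proof.
  intros He [[Ha | <-] Hab].
  - rewrite !rpow_Rpower by lra; apply Rle_Rpower_l; lra.
  - rewrite rpow_0l; apply rpow_ge0.
Qed.

Lemma rpow_le1 e x : 0 <= e -> 0 <= x <= 1 -> rpow x e <= 1.
Proof. intros; rewrite <- (rpow_1l e); apply rpow_le_compat; lra. Qed.

Lemma rpow_mult_distr x y e : 0 <= x -> 0 <= y -> rpow (x * y) e = rpow x e * rpow y e.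
Proof.
  intros [Hx | <-] [Hy | <-]; rewrite ?Rmult_0_l, ?Rmult_0_r, ?rpow_0l; try ring.
  rewrite !rpow_Rpower by nra; symmetry; apply Rpower_mult_distr; lra.
Qed.

Lemma rpow_plus x p q : 0 <= x -> rpow x (p + q) = rpow x p * rpow x q.
Proof.
  intros [Hx | <-]; rewrite ?rpow_0l; [|ring].
  rewrite !rpow_Rpower by lra; apply Rpower_plus.
Qed.

Lemma rpow_rpow x a b : 0 <= x -> rpow (rpow x a) b = rpow x (a * b).
Proof.
  intros [Hx | <-]; [|rewrite !rpow_0l; reflexivity].
  rewrite (rpow_Rpower x a), !rpow_Rpower by (try apply exp_pos; lra).
  apply Rpower_mult.
Qed.

Lemma rpow_sqr k s : 0 <= s -> rpow s k = rpow (s * s) (k / 2).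
Proof.
  intros; rewrite rpow_mult_distr, <- rpow_plus by lra; f_equal; field.
Qed.

Lemma kroot_le_compat k a b : 0 < k -> 0 <= a <= b -> kroot k a <= kroot k b.
Proof. intros; apply rpow_le_compat; auto; left; apply Rinv_0_lt_compat, H. Qed.

Lemma mul_kroot k s x : 0 < k -> 0 <= s -> 0 <= x -> s * kroot k x = kroot k (rpow s k * x).
Proof.
  intros Hk Hs Hx; unfold kroot.
  rewrite rpow_mult_distr, rpow_rpow by (auto using rpow_ge0).
  replace (k * / k) with 1 by (field; lra); rewrite rpow_1r; auto.
Qed.

Lemma Rpower_secant_bounds m a b : 1 <= m -> 0 < a < b ->
  m * Rpower a (m - 1) * (b - a) <= Rpower b m - Rpower a m <= m * Rpower b (m - 1) * (b - a).
Proof.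
  intros Hm Hab.
  destruct (MVT_cor2 (fun t => Rpower t m) (fun t => m * Rpower t (m - 1)) a b)
    as [c [-> Hc]]; [lra | intros c Hc; apply derivable_pt_lim_power; lra |].
  assert (Rpower a (m - 1) <= Rpower c (m - 1)) by (apply Rle_Rpower_l; lra).
  assert (Rpower c (m - 1) <= Rpower b (m - 1)) by (apply Rle_Rpower_l; lra).
  split; apply Rmult_le_compat_r; nra.
Qed.

Lemma rpow_tangent_le m x y : 1 <= m -> 0 < x -> 0 <= y ->
  rpow x m + m * rpow x (m - 1) * (y - x) <= rpow y m.
Proof.
  intros Hm Hx [Hy | <-].
  - rewrite !rpow_Rpower by lra.
    destruct (Rtotal_order x y) as [Hxy | [<- | Hyx]].
    + pose proof (Rpower_secant_bounds m x y Hm (conj Hx Hxy)); lra.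
    + lra.
    + pose proof (Rpower_secant_bounds m y x Hm (conj Hy Hyx)); lra.
  - assert (Hxm : rpow x m = rpow x (m - 1) * x).
    { rewrite <- (rpow_1r x) at 3 by lra; rewrite <- rpow_plus by lra.
      replace (m - 1 + 1) with m by ring; reflexivity. }
    assert (0 <= (m - 1) * (rpow x (m - 1) * x))
      by (apply Rmult_le_pos; [|apply Rmult_le_pos; [apply rpow_ge0|]]; lra).
    rewrite rpow_0l, Hxm; nra.
Qed.

Lemma rpow_convex m a b l : 1 <= m -> 0 <= a -> 0 <= b -> 0 <= l <= 1 ->
  rpow (l * a + (1 - l) * b) m <= l * rpow a m + (1 - l) * rpow b m.
Proof.
  intros Hm Ha Hb Hl; set (x := l * a + (1 - l) * b).
  destruct (Rle_lt_or_eq_dec 0 x) as [Hx | Hx]; [unfold x; nra | |].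
  - pose proof (rpow_tangent_le m x a Hm Hx Ha).
    pose proof (rpow_tangent_le m x b Hm Hx Hb).
    set (c := m * rpow x (m - 1)) in *.
    assert (l * (c * (a - x)) + (1 - l) * (c * (b - x)) = 0) by (unfold x; ring).
    nra.
  - rewrite <- Hx, rpow_0l; pose proof (rpow_ge0 a m); pose proof (rpow_ge0 b m); nra.
Qed.

(* B + d and A are both convex combinations of B and A + d, with complementary weights. *)
Lemma rpow_increment_le m A B d : 1 <= m -> 0 <= B <= A -> 0 <= d ->
  rpow (B + d) m - rpow B m <= rpow (A + d) m - rpow A m.
Proof.
  intros Hm HBA Hd.
  destruct (Req_dec (A + d - B) 0) as [H0 | H0].
  { replace A with B by lra; replace d with 0 by lra; lra. }
  set (l := (A - B) / (A + d - B)).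
  assert (Hl : 0 <= l <= 1).
  { assert (l * (A + d - B) = A - B) by (unfold l; field; lra); nra. }
  pose proof (rpow_convex m (A + d) B l Hm ltac:(lra) ltac:(lra) Hl) as HA.
  pose proof (rpow_convex m (A + d) B (1 - l) Hm ltac:(lra) ltac:(lra) ltac:(lra)) as HBd.
  replace (l * (A + d) + (1 - l) * B) with A in HA by (unfold l; field; lra).
  replace ((1 - l) * (A + d) + (1 - (1 - l)) * B) with (B + d) in HBd by (unfold l; field; lra).
  lra.
Qed.

Lemma subadditive_of_ratio_antitone (f : R -> R) :
  f 0 = 0 ->
  (forall x y, 0 <= x <= y -> y <= 1 -> f x <= f y) ->
  (forall s y, 0 < s <= y -> y <= 1 -> s * f y <= y * f s) ->
  forall x s t, 0 <= x -> 0 <= s <= 1 -> 0 <= t <= 1 -> x <= s + t -> x <= 1 ->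
  f x <= f s + f t.
Proof.
  intros f0 f_mono f_ratio x s t Hx Hs Ht Hxst Hx1.
  assert (f_ge0 : forall z, 0 <= z <= 1 -> 0 <= f z)
    by (intros z Hz; rewrite <- f0; apply f_mono; lra).
  destruct (Req_dec s 0) as [-> | Hs0].
  { rewrite f0; pose proof (f_mono x t ltac:(lra) ltac:(lra)); lra. }
  destruct (Req_dec t 0) as [-> | Ht0].
  { rewrite f0; pose proof (f_mono x s ltac:(lra) ltac:(lra)); lra. }
  set (y := Rmin (s + t) 1).
  assert (y <= s + t) by apply Rmin_l.
  assert (y <= 1) by apply Rmin_r.
  assert (x <= y /\ s <= y /\ t <= y) as (Hxy & Hsy & Hty)
    by (repeat split; apply Rmin_glb; lra).
  pose proof (f_mono x y ltac:(lra) ltac:(lra)).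
  pose proof (f_ratio s y ltac:(lra) ltac:(lra)).
  pose proof (f_ratio t y ltac:(lra) ltac:(lra)).
  pose proof (f_ge0 y ltac:(lra)).
  assert (y * f y <= y * (f s + f t)) by nra.
  assert (f y <= f s + f t) by (apply (Rmult_le_reg_l y); lra).
  lra.
Qed.

Definition kdist_of_sine (k s : R) : R := kroot k (1 - rpow (1 - s * s) (k / 2)).

Lemma kroot_kdist_of_sine k a : 0 <= a <= 1 ->
  kroot k (1 - rpow a k) = kdist_of_sine k (sqrt (1 - a * a)).
Proof.
  intros Ha; unfold kdist_of_sine; rewrite sqrt_sqrt by nra.
  replace (1 - (1 - a * a)) with (a * a) by ring; rewrite <- rpow_sqr by lra.
  reflexivity.
Qed.

Lemma kdist_of_sine_0 k : kdist_of_sine k 0 = 0.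
Proof.
  unfold kdist_of_sine, kroot; rewrite Rmult_0_l, Rminus_0_r, rpow_1l, Rminus_diag.
  apply rpow_0l.
Qed.

Lemma kdist_of_sine_le k x y : 2 <= k -> 0 <= x <= y -> y <= 1 ->
  kdist_of_sine k x <= kdist_of_sine k y.
Proof.
  intros Hk Hxy Hy; apply kroot_le_compat; [lra |].
  assert (rpow (1 - y * y) (k / 2) <= rpow (1 - x * x) (k / 2)) by (apply rpow_le_compat; nra).
  assert (rpow (1 - x * x) (k / 2) <= 1) by (apply rpow_le1; nra).
  lra.
Qed.

(* With sigma = s^2, eta = y^2, m = k/2 this reads
   sigma^m - (sigma (1 - eta))^m <= eta^m - (eta (1 - sigma))^m,
   an instance of [rpow_increment_le] with shift sigma eta. *)
Lemma kdist_of_sine_ratio k s y : 2 <= k -> 0 < s <= y -> y <= 1 ->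
  s * kdist_of_sine k y <= y * kdist_of_sine k s.
Proof.
  intros Hk Hs Hy; unfold kdist_of_sine.
  assert (rpow (1 - y * y) (k / 2) <= 1) by (apply rpow_le1; nra).
  assert (rpow (1 - s * s) (k / 2) <= 1) by (apply rpow_le1; nra).
  rewrite !mul_kroot by lra; apply kroot_le_compat; [lra | split].
  { apply Rmult_le_pos; [apply rpow_ge0 | lra]. }
  rewrite (rpow_sqr k s), (rpow_sqr k y) by lra.
  set (sigma := s * s) in *; set (eta := y * y) in *; set (m := k / 2) in *.
  assert (Hsig : 0 < sigma <= eta) by (unfold sigma, eta; nra).
  assert (eta <= 1) by (unfold eta; nra).
  pose proof (rpow_increment_le m (eta * (1 - sigma)) (sigma * (1 - eta)) (sigma * eta)
                ltac:(unfold m; lra) ltac:(nra) ltac:(nra)) as Hinc.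
  replace (eta * (1 - sigma) + sigma * eta) with eta in Hinc by ring.
  replace (sigma * (1 - eta) + sigma * eta) with sigma in Hinc by ring.
  rewrite !rpow_mult_distr in Hinc by lra.
  lra.
Qed.

Lemma kroot_triangle_of_sine_triangle k a b c : 2 <= k ->
  0 <= a <= 1 -> 0 <= b <= 1 -> 0 <= c <= 1 ->
  sqrt (1 - a * a) <= sqrt (1 - b * b) + sqrt (1 - c * c) ->
  kroot k (1 - rpow a k) <= kroot k (1 - rpow b k) + kroot k (1 - rpow c k).
Proof.
  intros Hk Ha Hb Hc Hsine; rewrite !kroot_kdist_of_sine by assumption.
  assert (sine_range : forall z, 0 <= z <= 1 -> 0 <= sqrt (1 - z * z) <= 1).
  { intros z Hz; split; [apply sqrt_pos |].
    rewrite <- sqrt_1 at 2; apply sqrt_le_1_alt; nra. }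
  apply subadditive_of_ratio_antitone; auto using sqrt_pos, kdist_of_sine_0.
  - intros; apply kdist_of_sine_le; auto.
  - intros; apply kdist_of_sine_ratio; auto.
  - apply sine_range; auto.
Qed.

Lemma sqr_Rabs x : Rabs x * Rabs x = x * x.
Proof. unfold Rabs; destruct (Rcase_abs x); ring. Qed.

(* With b = |Q|, c = |R| and sines sb, sc, either bc <= sb sc, and then Q^2 + R^2 <= 1, or
   |P| >= bc - sb sc and 1 - P^2 <= (sb c + b sc)^2 since (bc - sb sc)^2 + (sb c + b sc)^2 = 1. *)
Lemma sine_triangle P Q R : Q * Q <= 1 -> R * R <= 1 ->
  (P - Q * R) * (P - Q * R) <= (1 - Q * Q) * (1 - R * R) ->
  sqrt (1 - P * P) <= sqrt (1 - Q * Q) + sqrt (1 - R * R).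
Proof.
  intros HQ HR Hgram.
  set (sb := sqrt (1 - Q * Q)); set (sc := sqrt (1 - R * R)).
  assert (Hsb : sb * sb = 1 - Q * Q) by (apply sqrt_sqrt; lra).
  assert (Hsc : sc * sc = 1 - R * R) by (apply sqrt_sqrt; lra).
  assert (0 <= sb) by apply sqrt_pos.
  assert (0 <= sc) by apply sqrt_pos.
  set (b := Rabs Q); set (c := Rabs R).
  assert (Hb : b * b = Q * Q) by apply sqr_Rabs.
  assert (Hc : c * c = R * R) by apply sqr_Rabs.
  assert (0 <= b) by apply Rabs_pos.
  assert (0 <= c) by apply Rabs_pos.
  assert (Hdist : Rabs (P - Q * R) <= sb * sc).
  { apply Rsqr_incr_0_var; [unfold Rsqr; rewrite sqr_Rabs | nra].
    replace (sb * sc * (sb * sc)) with ((1 - Q * Q) * (1 - R * R))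
      by (rewrite <- Hsb, <- Hsc; ring).
    exact Hgram. }
  assert (HP : b * c - sb * sc <= Rabs P).
  { pose proof (Rabs_triang_inv (Q * R) (Q * R - P)) as Htri.
    replace (Q * R - (Q * R - P)) with P in Htri by ring.
    rewrite Rabs_mult, Rabs_minus_sym in Htri; fold b c in Htri; lra. }
  rewrite <- (sqrt_square (sb + sc)) by lra; apply sqrt_le_1_alt.
  destruct (Rle_or_lt (b * c) (sb * sc)) as [Hsmall | Hlarge].
  - assert (b * c * (b * c) <= sb * sc * (sb * sc)) by (apply Rmult_le_compat; nra).
    assert (Q * Q * (R * R) <= (1 - Q * Q) * (1 - R * R))
      by (rewrite <- Hsb, <- Hsc, <- Hb, <- Hc; lra).
    assert (0 <= sb * sc) by nra.
    nra.
  - assert ((b * c - sb * sc) * (b * c - sb * sc) <= P * P)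
      by (rewrite <- (sqr_Rabs P); apply Rmult_le_compat; lra).
    assert (b <= 1) by nra.
    assert (c <= 1) by nra.
    assert (sb * c + b * sc <= sb + sc) by nra.
    assert ((sb * c + b * sc) * (sb * c + b * sc) <= (sb + sc) * (sb + sc))
      by (apply Rmult_le_compat; nra).
    nra.
Qed.

Lemma quadratic_nonneg_discr A B C : 0 <= C ->
  (forall t, 0 <= A + 2 * t * B + t * t * C) -> B * B <= A * C.
Proof.
  intros [HC | <-] Hq.
  - pose proof (Hq (- B / C)) as Hmin.
    replace (A + 2 * (- B / C) * B + - B / C * (- B / C) * C) with ((A * C - B * B) / C)
      in Hmin by (field; lra).
    assert (0 <= (A * C - B * B) / C * C) by (apply Rmult_le_pos; lra).
    replace ((A * C - B * B) / C * C) with (A * C - B * B) in H by (field; lra).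
    lra.
  - destruct (Req_dec B 0) as [-> | HB]; [lra | exfalso].
    pose proof (Hq (- (Rabs A + 1) / (2 * B))) as Hneg.
    replace (A + 2 * (- (Rabs A + 1) / (2 * B)) * B
             + - (Rabs A + 1) / (2 * B) * (- (Rabs A + 1) / (2 * B)) * 0)
      with (A - (Rabs A + 1)) in Hneg by (field; lra).
    pose proof (Rle_abs A); lra.
Qed.

Section RealInnerSpace.

Variables (V : Type) (S : RInnerSpace V).
Notation ip := (r_inner S).
Notation add := (r_add V S).
Notation scal := (r_scal V S).

Lemma r_inner_addr x y z : ip x (add y z) = ip x y + ip x z.
Proof. rewrite !(r_inner_sym _ _ x), r_inner_addl; reflexivity. Qed.

Lemma r_inner_scalr a x y : ip x (scal a y) = a * ip x y.
Proof. rewrite !(r_inner_sym _ _ x), r_inner_scall; reflexivity. Qed.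

Lemma r_inner_expand x a y z b t :
  ip (add x (scal a y)) (add z (scal b t)) = ip x z + b * ip x t + a * ip y z + a * b * ip y t.
Proof. rewrite !r_inner_addl, !r_inner_addr, !r_inner_scall, !r_inner_scalr; ring. Qed.

Lemma r_cauchy_schwarz x y : ip x y * ip x y <= ip x x * ip y y.
Proof.
  apply quadratic_nonneg_discr; [apply r_inner_pos | intro t].
  pose proof (r_inner_pos _ S (add x (scal t y))) as Hpos.
  rewrite r_inner_expand, (r_inner_sym _ S y x) in Hpos; lra.
Qed.

Lemma r_norm1_inner u : r_norm S u = 1 -> ip u u = 1.
Proof.
  unfold r_norm; intro Hu.
  rewrite <- (sqrt_sqrt (ip u u)), Hu by apply r_inner_pos; ring.
Qed.

(* Cauchy-Schwarz for the components u - <u,w> w and v - <v,w> w of u, v orthogonal to w. *)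
Lemma r_gram_unit u v w : ip u u = 1 -> ip v v = 1 -> ip w w = 1 ->
  (ip u v - ip u w * ip w v) * (ip u v - ip u w * ip w v)
    <= (1 - ip u w * ip u w) * (1 - ip w v * ip w v).
Proof.
  intros Hu Hv Hw.
  pose proof (r_cauchy_schwarz (add u (scal (- ip u w) w)) (add v (scal (- ip w v) w))) as Hcs.
  rewrite !r_inner_expand, (r_inner_sym _ S w u), (r_inner_sym _ S v w), Hu, Hv, Hw in Hcs.
  nra.
Qed.

Lemma r_inner_unit_sqr_le1 u v : ip u u = 1 -> ip v v = 1 -> ip u v * ip u v <= 1.
Proof. intros Hu Hv; pose proof (r_cauchy_schwarz u v); rewrite Hu, Hv in *; lra. Qed.

Lemma r_kroot_triangle u v w k :
  r_norm S u = 1 -> r_norm S v = 1 -> r_norm S w = 1 -> 2 <= k ->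
  kroot k (1 - rpow (Rabs (ip u v)) k)
    <= kroot k (1 - rpow (Rabs (ip u w)) k) + kroot k (1 - rpow (Rabs (ip w v)) k).
Proof.
  intros Hu Hv Hw Hk; apply r_norm1_inner in Hu, Hv, Hw.
  assert (Habs : forall x y, ip x x = 1 -> ip y y = 1 -> 0 <= Rabs (ip x y) <= 1).
  { intros x y Hx Hy; pose proof (r_inner_unit_sqr_le1 x y Hx Hy).
    pose proof (sqr_Rabs (ip x y)); pose proof (Rabs_pos (ip x y)); nra. }
  apply kroot_triangle_of_sine_triangle; auto.
  rewrite !sqr_Rabs; apply sine_triangle; auto using r_inner_unit_sqr_le1, r_gram_unit.
Qed.

End RealInnerSpace.

Lemma mkC_eq a b c d : a = c -> b = d -> mkC a b = mkC c d.
Proof. intros -> ->; reflexivity. Qed.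

Lemma Cconj_involutive z : Cconj (Cconj z) = z.
Proof. destruct z; unfold Cconj; simpl; rewrite Ropp_involutive; reflexivity. Qed.

Lemma Cmod_ge0 z : 0 <= Cmod z.
Proof. apply sqrt_pos. Qed.

Lemma Cmod_sqr z : Cmod z * Cmod z = Cre z * Cre z + Cim z * Cim z.
Proof. unfold Cmod; rewrite sqrt_sqrt by nra; ring. Qed.

Lemma Cmod_mult a b : Cmod (Cmul a b) = Cmod a * Cmod b.
Proof.
  unfold Cmod; rewrite <- sqrt_mult by nra; f_equal.
  destruct a, b; unfold Cmul; simpl; ring.
Qed.

Lemma Cmod_conj z : Cmod (Cconj z) = Cmod z.
Proof. unfold Cmod; destruct z; simpl; f_equal; ring. Qed.

Lemma Cre_sqr_le_Cmod z : Cre z * Cre z <= Cmod z * Cmod z.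
Proof. rewrite Cmod_sqr; nra. Qed.

Lemma exists_phase z : exists l, Cmod l = 1 /\ Cmul l z = mkC (Cmod z) 0.
Proof.
  destruct (Req_dec (Cmod z) 0) as [Hz | Hz].
  - exists (mkC 1 0); split.
    + unfold Cmod; cbn [Cre Cim]; replace (1 ^ 2 + 0 ^ 2) with 1 by ring; apply sqrt_1.
    + pose proof (Cmod_sqr z); rewrite Hz.
      destruct z as [x y]; simpl in *; unfold Cmul; simpl.
      apply mkC_eq; nra.
  - exists (mkC (Cre z / Cmod z) (- Cim z / Cmod z)); split.
    + apply Rsqr_inj; [apply Cmod_ge0 | lra |]; unfold Rsqr.
      rewrite Cmod_sqr; simpl.
      replace 1 with ((Cre z * Cre z + Cim z * Cim z) / (Cmod z * Cmod z)) at 2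
        by (rewrite <- Cmod_sqr; field; exact Hz).
      field; exact Hz.
    + unfold Cmul; simpl; apply mkC_eq; [| field; exact Hz].
      apply (Rmult_eq_reg_r (Cmod z)); [| exact Hz].
      rewrite Cmod_sqr; field; exact Hz.
Qed.

Section ComplexInnerSpace.

Variables (V : Type) (S : CInnerSpace V).
Notation ip := (c_inner S).
Notation scal := (c_scal V S).

Lemma c_inner_diag_im x : Cim (ip x x) = 0.
Proof.
  pose proof (c_inner_conj _ S x x) as Hconj.
  destruct (ip x x) as [a b]; injection Hconj; simpl; lra.
Qed.

Lemma c_inner_scalr a x y : ip x (scal a y) = Cmul (Cconj a) (ip x y).
Proof.
  rewrite c_inner_conj, c_inner_scall, (c_inner_conj _ S x y).
  destruct a, (ip x y); unfold Cmul, Cconj; simpl; apply mkC_eq; ring.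
Qed.

Lemma c_norm_scal a x : c_norm S (scal a x) = Cmod a * c_norm S x.
Proof.
  unfold c_norm, Cmod; rewrite <- sqrt_mult by (try apply c_inner_pos; nra); f_equal.
  rewrite c_inner_scall, c_inner_scalr.
  pose proof (c_inner_diag_im x).
  destruct a, (ip x x); unfold Cmul, Cconj; simpl in *; subst; ring.
Qed.

Definition realify : RInnerSpace V.
Proof.
  refine {| r_add := c_add V S; r_zero := c_zero V S; r_opp := c_opp V S;
            r_scal a x := scal (mkC a 0) x; r_inner x y := Cre (ip x y) |}.
  - apply c_addA.
  - apply c_addC.
  - apply c_add0.
  - apply c_addN.
  - intros a b x; rewrite c_scalA; f_equal; unfold Cmul; simpl; apply mkC_eq; ring.
  - apply c_scal1.
  - intros; apply c_scalDr.
  - intros a b x; rewrite <- c_scalDl; f_equal; unfold Cadd; simpl; apply mkC_eq; ring.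
  - intros x y; rewrite (c_inner_conj _ S x y); reflexivity.
  - intros x y z; rewrite c_inner_addl; reflexivity.
  - intros a x z; rewrite c_inner_scall; simpl; ring.
  - intros; apply c_inner_pos.
  - intros x Hx; apply c_inner_def; pose proof (c_inner_diag_im x).
    destruct (ip x x); simpl in *; subst; reflexivity.
Defined.

Lemma realify_inner x y : r_inner realify x y = Cre (ip x y).
Proof. reflexivity. Qed.

Lemma realify_norm x : r_norm realify x = c_norm S x.
Proof. reflexivity. Qed.

Lemma c_norm_scal_unit a x : Cmod a = 1 -> c_norm S x = 1 -> r_norm realify (scal a x) = 1.
Proof. intros Ha Hx; rewrite realify_norm, c_norm_scal, Ha, Hx; ring. Qed.

(* Rotating u by a phase makes <u, v> real and nonnegative; then apply the real Cauchy-Schwarz. *)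
Lemma c_inner_unit_Cmod_le1 u v : c_norm S u = 1 -> c_norm S v = 1 -> Cmod (ip u v) <= 1.
Proof.
  intros Hu Hv; destruct (exists_phase (ip u v)) as [l [Hl Hp]].
  pose proof (r_norm1_inner _ _ _ (c_norm_scal_unit l u Hl Hu)) as Hu'.
  rewrite <- realify_norm in Hv; apply r_norm1_inner in Hv.
  pose proof (r_inner_unit_sqr_le1 _ realify _ _ Hu' Hv) as Hcs.
  rewrite realify_inner, c_inner_scall, Hp in Hcs; cbn [Cre] in Hcs.
  pose proof (Cmod_ge0 (ip u v)); nra.
Qed.

Lemma c_kroot_triangle u v w k :
  c_norm S u = 1 -> c_norm S v = 1 -> c_norm S w = 1 -> 2 <= k ->
  kroot k (1 - rpow (Cmod (ip u v)) k)
    <= kroot k (1 - rpow (Cmod (ip u w)) k) + kroot k (1 - rpow (Cmod (ip w v)) k).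
Proof.
  intros Hu Hv Hw Hk.
  destruct (exists_phase (ip u w)) as [l [Hl Hq]].
  destruct (exists_phase (ip w v)) as [n [Hn Hr]].
  set (u' := scal l u); set (v' := scal (Cconj n) v).
  assert (Hu' : r_inner realify u' u' = 1)
    by (apply r_norm1_inner, c_norm_scal_unit; auto).
  assert (Hv' : r_inner realify v' v' = 1)
    by (apply r_norm1_inner, c_norm_scal_unit; rewrite ?Cmod_conj; auto).
  assert (Hw' : r_inner realify w w = 1) by (apply r_norm1_inner; exact Hw).
  assert (Hq' : ip u' w = mkC (Cmod (ip u w)) 0) by (unfold u'; rewrite c_inner_scall; exact Hq).
  assert (Hr' : ip w v' = mkC (Cmod (ip w v)) 0)
    by (unfold v'; rewrite c_inner_scalr, Cconj_involutive; exact Hr).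
  assert (Hp' : Cmod (ip u' v') = Cmod (ip u v)).
  { unfold u', v'; rewrite c_inner_scall, c_inner_scalr, Cconj_involutive, !Cmod_mult, Hl, Hn; ring. }
  pose proof (r_gram_unit _ realify u' v' w Hu' Hv' Hw') as Hgram.
  rewrite !realify_inner, Hq', Hr' in Hgram; cbn [Cre] in Hgram.
  pose proof (Cre_sqr_le_Cmod (ip u' v')) as Hre; rewrite Hp' in Hre.
  pose proof (c_inner_unit_Cmod_le1 u v Hu Hv).
  pose proof (c_inner_unit_Cmod_le1 u w Hu Hw).
  pose proof (c_inner_unit_Cmod_le1 w v Hw Hv).
  pose proof (Cmod_ge0 (ip u v)); pose proof (Cmod_ge0 (ip u w)); pose proof (Cmod_ge0 (ip w v)).
  apply kroot_triangle_of_sine_triangle; auto.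
  eapply Rle_trans; [apply sqrt_le_1_alt | apply sine_triangle; [nra | nra | exact Hgram]].
  lra.
Qed.

End ComplexInnerSpace.

Theorem corollary5 :
  (* real inner product spaces *)
  (forall (V : Type) (S : RInnerSpace V) (u v w : V) (k : R),
     r_norm S u = 1 -> r_norm S v = 1 -> r_norm S w = 1 -> 2 <= k ->
     kroot k (1 - rpow (Rabs (r_inner S u v)) k)
       <= kroot k (1 - rpow (Rabs (r_inner S u w)) k)
          + kroot k (1 - rpow (Rabs (r_inner S w v)) k))
  /\
  (* complex inner product spaces: modulus, and |Re| *)
  (forall (V : Type) (S : CInnerSpace V) (u v w : V) (k : R),
     c_norm S u = 1 -> c_norm S v = 1 -> c_norm S w = 1 -> 2 <= k ->
     kroot k (1 - rpow (Cmod (c_inner S u v)) k)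
       <= kroot k (1 - rpow (Cmod (c_inner S u w)) k)
          + kroot k (1 - rpow (Cmod (c_inner S w v)) k)
     /\
     kroot k (1 - rpow (Rabs (Cre (c_inner S u v))) k)
       <= kroot k (1 - rpow (Rabs (Cre (c_inner S u w))) k)
          + kroot k (1 - rpow (Rabs (Cre (c_inner S w v))) k)).
Proof.
  split.
  - exact r_kroot_triangle.
  - intros V S u v w k Hu Hv Hw Hk; split.
    + exact (c_kroot_triangle V S u v w k Hu Hv Hw Hk).
    + exact (r_kroot_triangle V (realify V S) u v w k Hu Hv Hw Hk).
Qed.
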